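(* Let $d\ge1$ be an integer, $C>1$ real, and $\rho$ a growth function with $\rho(x)\ge x$ and $\rho(x)\le Cx^d$ for all $x\ge1$. Let $m\ge1$ and $0\le k\le m$ be integers and $\sigma\in\{-1,1\}^m$ with $|\sigma|=k$ and $\operatorname{disc}(\sigma)\ge0$. If $(a,b)=f^\rho_\sigma$, then $$0\le b=2k-m\le k\quad\text{and}\quad 0\le a\le\tau^\rho_{m-k}(k,k)\le(2C)^{(m-k)d^{m-k}}(2k)^{d^{m-k}}.$$
   Context: A growth function is an increasing $\rho:\mathbb{R}\to\mathbb{R}^{\ge0}$. Binary strings are elements of $\{-1,1\}^m$ (the empty string $<>$ for $m=0$); $|\sigma|$ is the number of coordinates equal to $1$; $\operatorname{disc}(\sigma)=\sum_i\sigma_i$; $\sigma\wedge u$ denotes concatenation. $f^\rho_\sigma\in\mathbb{R}^2$ is defined recursively: $f^\rho_{<>}=(0,0)$, and if $f^\rho_\sigma=(a,b)$ then $f^\rho_{\sigma\wedge1}=(a+1,b+1)$ and $f^\rho_{\sigma\wedge-1}=(a+\rho(a+b),b-1)$. The functions $\tau^\rho_i:\mathbb{Z}^2\to\mathbb{R}$ are $\tau^\rho_0(x,y)=x$, $\tau^\rho_{i+1}(x,y)=\tau^\rho_i(x,y)+\rho(\tau^\rho_i(x,y)+y-i)$. *)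

From Stdlib Require Import Reals Lra Lia List ZArith.
Import ListNotations.
Open Scope R_scope.

(* A growth function: increasing (read as non-decreasing) and nonnegative. *)
Definition growth_function (rho : R -> R) : Prop :=
  (forall x y, x <= y -> rho x <= rho y) /\ (forall x, 0 <= rho x).

Definition is_binary_string (s : list Z) : Prop :=
  Forall (fun u => u = 1%Z \/ u = (-1)%Z) s.

Definition ones (s : list Z) : nat :=
  List.length (filter (fun u => Z.eqb u 1) s).

Definition discrepancy (s : list Z) : Z := fold_right Z.add 0%Z s.

Definition f_step (rho : R -> R) (p : R * R) (u : Z) : R * R :=
  let (a, b) := p in
  if Z.eqb u 1 then (a + 1, b + 1) else (a + rho (a + b), b - 1).

Definition f_rho (rho : R -> R) (s : list Z) : R * R :=
  fold_left (f_step rho) s (0, 0).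

Fixpoint tau (rho : R -> R) (i : nat) (x y : Z) : R :=
  match i with
  | O => IZR x
  | S j => tau rho j x y + rho (tau rho j x y + IZR y - INR j)
  end.

(* Appending [+1] raises both coordinates by one and appending [-1] applies
   [(a, b) |-> (a + rho (a + b), b - 1)]; since [rho] is nondecreasing, moving
   a [+1] in front of a [-1] can only increase [a].  Hence [a] is largest when
   all [k] ones come first, which yields [tau_(m-k) (k, k)].  Nonnegative
   discrepancy means [m - k <= k], and along the [m - k] descending steps
   [T_i := tau_i (k, k) + k] satisfies [T_(i+1) <= T_i + C T_i^d <= 2C T_i^d],
   which iterates to the stated power bound. *)

From Stdlib Require Import Reals List ZArith Lra Lia.
Open Scope R_scope.

(* [descend rho n x y] is the first coordinate after appending [n] copies of
   [-1] to a string with [f = (x, y)]; [tau] unrolls the same recursion from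
   the other end. *)
Fixpoint descend (rho : R -> R) (n : nat) (x y : R) : R :=
  match n with
  | O => x
  | S n => descend rho n (x + rho (x + y)) (y - 1)
  end.

Lemma descend_mono rho n x x' y :
  growth_function rho -> x <= x' -> descend rho n x y <= descend rho n x' y.
Proof.
  intros [Hmono _]; revert x x' y.
  induction n as [|n IH]; intros x x' y Hx; simpl; [exact Hx|].
  apply IH. assert (rho (x + y) <= rho (x' + y)) by (apply Hmono; lra). lra.
Qed.

Lemma descend_succ_last rho n x y :
  descend rho (S n) x y = descend rho n x y + rho (descend rho n x y + y - INR n).
Proof.
  revert x y; induction n as [|n IH]; intros x y.
  - simpl. now replace (x + y - 0) with (x + y) by lra.
  - change (descend rho (S (S n)) x y)
      with (descend rho (S n) (x + rho (x + y)) (y - 1)).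
    rewrite IH, S_INR. simpl. do 2 f_equal. lra.
Qed.

Lemma tau_descend rho n x y : tau rho n x y = descend rho n (IZR x) (IZR y).
Proof.
  induction n as [|n IH]; [reflexivity|].
  cbn [tau]. now rewrite descend_succ_last, IH.
Qed.

Lemma ones_le_length s : (ones s <= length s)%nat.
Proof.
  unfold ones; induction s as [|u s IH]; simpl; [lia|].
  destruct (Z.eqb u 1); simpl; lia.
Qed.

Lemma ones_cons u s :
  ones (u :: s) = if Z.eqb u 1 then S (ones s) else ones s.
Proof. unfold ones; simpl; now destruct (Z.eqb u 1). Qed.

Lemma discrepancy_ones s : is_binary_string s ->
  discrepancy s = (Z.of_nat (ones s) - Z.of_nat (length s - ones s))%Z.
Proof.
  induction 1 as [|u s Hu Hs IH]; [reflexivity|].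
  pose proof (ones_le_length s).
  change (discrepancy (u :: s)) with (u + discrepancy s)%Z. rewrite IH.
  rewrite ones_cons; cbn [length].
  destruct Hu as [-> | ->]; cbn [Z.eqb Pos.eqb]; lia.
Qed.

Lemma fold_f_step_bounds rho s a0 b0 a b :
  growth_function rho -> is_binary_string s ->
  fold_left (f_step rho) s (a0, b0) = (a, b) ->
  b = b0 + INR (ones s) - INR (length s - ones s) /\ a0 <= a /\
  a <= descend rho (length s - ones s) (a0 + INR (ones s)) (b0 + INR (ones s)).
Proof.
  intros Hg Hs; pose proof Hg as [Hmono Hnonneg].
  revert a0 b0; induction Hs as [|u s Hu Hs IH]; intros a0 b0 Hf.
  { simpl in Hf. inversion Hf. simpl. lra. }
  pose proof (ones_le_length s) as Hle. pose proof (pos_INR (ones s)).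
  rewrite ones_cons; cbn [length].
  destruct Hu as [-> | ->]; simpl in Hf; cbn [Z.eqb Pos.eqb];
    destruct (IH _ _ Hf) as (Hb & Ha0 & Ha).
  - replace (length s - ones s)%nat with (S (length s) - S (ones s))%nat
      in Hb, Ha by lia.
    rewrite S_INR. split; [lra|split; [lra|]].
    replace (a0 + (INR (ones s) + 1)) with (a0 + 1 + INR (ones s)) by lra.
    now replace (b0 + (INR (ones s) + 1)) with (b0 + 1 + INR (ones s)) by lra.
  - replace (S (length s) - ones s)%nat with (S (length s - ones s)) by lia.
    pose proof (Hnonneg (a0 + b0)).
    assert (rho (a0 + b0) <= rho (a0 + INR (ones s) + (b0 + INR (ones s))))
      by (apply Hmono; lra).
    rewrite S_INR. split; [lra|split; [lra|]].
    simpl. eapply Rle_trans; [exact Ha|].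
    replace (b0 - 1 + INR (ones s)) with (b0 + INR (ones s) - 1) by lra.
    apply descend_mono; [exact Hg | lra].
Qed.

Lemma tau_ge_start rho i x y :
  (forall z, 0 <= rho z) -> IZR x <= tau rho i x y.
Proof.
  intros Hnonneg; induction i as [|i IH]; simpl; [lra|].
  pose proof (Hnonneg (tau rho i x y + IZR y - INR i)). lra.
Qed.

Lemma pow_ge_base x d : (1 <= d)%nat -> 1 <= x -> x <= x ^ d.
Proof.
  intros Hd Hx. rewrite <- (pow_1 x) at 1. now apply Rle_pow.
Qed.

Lemma add_poly_growth_le rho C d y T :
  (1 <= d)%nat -> 1 < C -> (forall x, 1 <= x -> rho x <= C * x ^ d) ->
  1 <= y -> y <= T -> T + rho y <= 2 * C * T ^ d.
Proof.
  intros Hd HC Hrho Hy HyT.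
  assert (rho y <= C * T ^ d).
  { eapply Rle_trans; [now apply Hrho|].
    apply Rmult_le_compat_l; [lra|]. apply pow_incr; lra. }
  assert (T <= T ^ d) by (apply pow_ge_base; [exact Hd | lra]).
  assert (0 <= T ^ d) by (apply pow_le; lra).
  assert (T ^ d <= C * T ^ d) by nra.
  lra.
Qed.

Lemma pow_bound_step c x d i : (1 <= d)%nat -> 1 <= c -> 0 <= x ->
  c * (c ^ (i * d ^ i) * x ^ (d ^ i)) ^ d
    <= c ^ (S i * d ^ S i) * x ^ (d ^ S i).
Proof.
  intros Hd Hc Hx.
  assert (Hpow : (d ^ S i = d ^ i * d)%nat) by (rewrite Nat.pow_succ_r'; lia).
  assert (Hpos : (1 <= d ^ S i)%nat)
    by (rewrite <- (Nat.pow_1_l (S i)); now apply Nat.pow_le_mono_l).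
  rewrite Rpow_mult_distr, <- !pow_mult, <- Rmult_assoc, <- Nat.mul_assoc,
    <- !Hpow.
  rewrite <- (pow_1 c) at 1. rewrite <- pow_add.
  apply Rmult_le_compat_r; [apply pow_le; lra|].
  apply Rle_pow; [lra|]. simpl. lia.
Qed.

Lemma tau_pow_bound rho d C (k i : nat) :
  (1 <= d)%nat -> 1 < C -> (forall x, 0 <= rho x) ->
  (forall x, 1 <= x -> rho x <= C * x ^ d) -> (i <= k)%nat ->
  tau rho i (Z.of_nat k) (Z.of_nat k) + INR k
    <= (2 * C) ^ (i * d ^ i) * (2 * INR k) ^ (d ^ i).
Proof.
  intros Hd HC Hnonneg Hrho.
  pose proof (pos_INR k).
  induction i as [|i IH]; intros Hik.
  { simpl. rewrite <- INR_IZR_INZ. lra. }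
  assert (Hlow := tau_ge_start rho i (Z.of_nat k) (Z.of_nat k) Hnonneg).
  rewrite <- INR_IZR_INZ in Hlow.
  assert (Hi : INR i + 1 <= INR k) by (rewrite <- S_INR; apply le_INR; lia).
  pose proof (pos_INR i).
  specialize (IH ltac:(lia)).
  cbn [tau]. rewrite <- INR_IZR_INZ.
  set (t := tau rho i (Z.of_nat k) (Z.of_nat k)) in *.
  eapply Rle_trans; [|apply pow_bound_step; [exact Hd | lra | lra]].
  eapply Rle_trans.
  { replace (t + rho (t + INR k - INR i) + INR k)
      with (t + INR k + rho (t + INR k - INR i)) by lra.
    apply (add_poly_growth_le rho C d); [exact Hd | lra | exact Hrho | lra | lra]. }
  apply Rmult_le_compat_l; [lra|]. apply pow_incr; lra.
Qed.

Theorem mainTheorem18 (d : nat) (C : R) (rho : R -> R)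
  (m k : nat) (sigma : list Z) (a b : R) :
  (1 <= d)%nat -> 1 < C -> growth_function rho ->
  (forall x, 1 <= x -> x <= rho x) ->
  (forall x, 1 <= x -> rho x <= C * x ^ d) ->
  (1 <= m)%nat -> (k <= m)%nat ->
  is_binary_string sigma -> (List.length sigma = m)%nat ->
  (ones sigma = k)%nat -> (0 <= discrepancy sigma)%Z ->
  f_rho rho sigma = (a, b) ->
  (0 <= b /\ b = 2 * INR k - INR m /\ b <= INR k) /\
  (0 <= a /\ a <= tau rho (m - k) (Z.of_nat k) (Z.of_nat k) /\
   tau rho (m - k) (Z.of_nat k) (Z.of_nat k)
     <= (2 * C) ^ ((m - k) * d ^ (m - k)) * (2 * INR k) ^ (d ^ (m - k))).
Proof.
  intros Hd HC Hg _ Hrho _ Hkm Hs Hlen Hones Hdisc Hf.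
  rewrite (discrepancy_ones _ Hs), Hlen, Hones in Hdisc.
  assert (Hmk : (m - k <= k)%nat) by lia.
  destruct (fold_f_step_bounds rho sigma 0 0 a b Hg Hs Hf) as (Hb & Ha0 & Ha).
  rewrite Hlen, Hones, !Rplus_0_l in *.
  rewrite minus_INR in Hb by lia.
  pose proof (le_INR _ _ Hmk) as Hmk'. rewrite minus_INR in Hmk' by lia.
  pose proof (pos_INR k). pose proof (le_INR _ _ Hkm).
  pose proof (tau_pow_bound rho d C k (m - k) Hd HC (proj2 Hg) Hrho Hmk).
  rewrite tau_descend, <- INR_IZR_INZ in *.
  repeat split; lra.
Qed.
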